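(* Let $\mathcal{A}$ be any (deterministic) online bin packing algorithm, let $F$ be a discrete probability distribution on $(0,1]$, and for a positive integer $n$ let $I_n(F)=(X_1,\ldots,X_n)$ be a list of $n$ i.i.d. samples from $F$. Then there exists a list $I$ of $n$ items such that $$\frac{\mathbb{E}[\mathcal{A}(I^\sigma)]}{\mathrm{OPT}(I)} \ge \frac{\mathbb{E}[\mathcal{A}(I_n(F))]}{\mathbb{E}[\mathrm{OPT}(I_n(F))]},$$ where $\sigma$ is uniform on $\mathcal{S}_n$. Moreover, if there is a constant $c>0$ such that $X_i\ge c$ almost surely for all $i\in[n]$, then $\mathrm{OPT}(I)\ge cn$.
   Context: Bin packing: items with sizes in $(0,1]$ are packed into unit-capacity bins (total size per bin at most $1$); $\mathrm{OPT}(I)$ is the minimum number of bins for list $I$, and $\mathcal{A}(I)$ the number of bins used by algorithm $\mathcal{A}$ when the items of $I$ arrive online in the given order. For $\sigma\in\mathcal{S}_n$ (permutations of $[n]$), $I^\sigma=(x_{\sigma(1)},\ldots,x_{\sigma(n)})$. *)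

From HB Require Import structures.
From mathcomp Require Import all_boot all_order all_algebra all_fingroup.
From mathcomp Require Import all_classical all_reals.
From mathcomp Require Import ereal esum.
Set Implicit Arguments. Unset Strict Implicit. Unset Printing Implicit Defensive.
Import Order.TTheory GRing.Theory Num.Theory.
Local Open Scope ring_scope.
Local Open Scope classical_set_scope.

Section BinPacking.
Variable R : realType.

Definition items_ok (s : seq R) : bool := all (fun x => (0 < x) && (x <= 1)) s.

Definition feasible (s : seq R) (k : nat) : bool :=
  [exists a : {ffun 'I_(size s) -> 'I_k},
     [forall j : 'I_k, \sum_(i < size s | a i == j) s`_i <= 1]].

(* OPT(s): the minimum number of bins (for valid lists, k = size s is
   always feasible, so the default value is never used). *)
Definition OPT (s : seq R) : nat :=
  \big[minn/(size s)]_(k < (size s).+1 | feasible s k) k.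

(* A deterministic online algorithm: given the items seen so far (in
   order) and the newly arriving item, it returns the (label of the) bin
   into which the new item is irrevocably placed.  Since the algorithm is
   deterministic, its whole state is a function of the past items. *)
Definition online_alg := seq R -> R -> nat.

Definition alg_assign (A : online_alg) (s : seq R) : seq nat :=
  mkseq (fun i => A (take i s) (nth 0 s i)) (size s).

Definition alg_bins (A : online_alg) (s : seq R) : nat :=
  size (undup (alg_assign A s)).

Definition valid_alg (A : online_alg) : Prop :=
  forall s : seq R, items_ok s -> forall b : nat,
    \sum_(i < size s | nth 0%N (alg_assign A s) i == b) s`_i <= 1.

Definition discrete_distr_01 (f : R -> R) : Prop :=
  [/\ forall x, 0 <= f x,
      forall x, 0 < f x -> 0 < x <= 1
    & (\esum_(x in [set: R]) (f x)%:E = 1)%E].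

Definition iid_expect (f : R -> R) (n : nat) (g : seq R -> nat) : \bar R :=
  \esum_(x in [set: n.-tuple R])
     ((\prod_(i < n) f (tnth x i)) * (g (tval x))%:R)%:E.

Definition permute_list n (I : n.-tuple R) (sigma : 'S_n) : seq R :=
  [seq tnth I (sigma i) | i <- enum 'I_n].

Definition perm_expect (A : online_alg) n (I : n.-tuple R) : R :=
  (n`!)%:R^-1 * \sum_(sigma : 'S_n) (alg_bins A (permute_list I sigma))%:R.

End BinPacking.

From HB Require Import structures.
From mathcomp Require Import all_boot all_order all_algebra all_fingroup.
From mathcomp Require Import all_classical all_reals.
From mathcomp Require Import ereal esum.
From mathcomp Require Import ring.
Import Order.TTheory GRing.Theory Num.Theory.
Local Open Scope ring_scope.
Set Implicit Arguments. Unset Strict Implicit. Unset Printing Implicit Defensive.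

(* Let w(x) = prod_i f(x_i) be the i.i.d. weight of an n-tuple x and
   K(x) = sum_sigma A(x^sigma).  The weight is invariant under permuting
   coordinates, so n! E[A(I_n(F))] = sum_x w(x) K(x), while
   E[OPT(I_n(F))] = sum_x w(x) OPT(x).  The pairs (K(x), OPT(x)) take finitely
   many values, so some I in the support of w maximises K/OPT, and a weighted
   average of ratios never exceeds the largest one.  The items of I lie in the
   support of f, hence c n <= sum(I) <= OPT(I). *)

Lemma exists_max_ratio (T : Type) (S : T -> Prop) (g h : T -> nat)
    (bg bh : nat) (t0 : T) :
  S t0 -> (forall x, g x <= bg)%N -> (forall x, h x <= bh)%N ->
  (forall x, S x -> 0 < h x)%N ->
  exists2 x, S x & forall y, S y -> (g y * h x <= g x * h y)%N.
Proof.
move=> St0 g_le h_le h_gt0.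
pose code x : 'I_bg.+1 * 'I_bh.+1 := (inord (g x), inord (h x)).
pose coded p := `[< exists2 x, S x & code x = p >].
pose ratio (p : 'I_bg.+1 * 'I_bh.+1) : rat := p.1%:R / p.2%:R.
have codedP x : S x -> coded (code x) by move=> Sx; apply/asboolP; exists x.
have [_ /asboolP[x Sx <-] ratio_max] := arg_maxP ratio (codedP t0 St0).
exists x => // y Sy; have := ratio_max _ (codedP y Sy).
rewrite /ratio /= !inordK ?ltnS //.
rewrite ler_pdivrMr ?ltr0n ?h_gt0 // mulrAC ler_pdivlMr ?ltr0n ?h_gt0 //.
by rewrite -!natrM ler_nat.
Qed.

Section WeightedAverages.
Variable R : realType.
Local Open Scope ereal_scope.

Lemma esum_mulrn (T : choiceType) (a : T -> \bar R) (m : nat) :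
  (forall x, 0 <= a x) ->
  (\esum_(x in [set: T]) a x) *+ m = \esum_(x in [set: T]) a x *+ m.
Proof.
move=> a_ge0.
have am x : a x *+ m = \sum_(j < m) a x by rewrite sumr_const card_ord.
under [RHS]eq_esum => x _ do rewrite am.
by rewrite esum_sum ?sumr_const ?card_ord // => x j _ _; exact: a_ge0.
Qed.

Lemma esum_ratio_le (T : choiceType) (w : T -> R) (g h : T -> nat) (x : T) :
  (forall y, 0 <= w y)%R ->
  (forall y, (0 < w y)%R -> (g y * h x <= g x * h y)%N) ->
  (\esum_(y in [set: T]) (w y * (g y)%:R)%:E) *+ h x
    <= (\esum_(y in [set: T]) (w y * (h y)%:R)%:E) *+ g x.
Proof.
move=> w_ge0 x_max.
rewrite !esum_mulrn => [|y|y]; try by rewrite lee_fin mulr_ge0.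
apply: le_esum => y _; rewrite -!EFin_natmul lee_fin -!mulrnAr -!mulrnA.
have [w0|w_neq0] := eqVneq (w y) 0%R; first by rewrite w0 !mul0r.
rewrite ler_wpM2l // ler_nat [(h y * _)%N]mulnC; apply: x_max.
by rewrite lt_def w_neq0 w_ge0.
Qed.

Lemma fine_ratio_le (a b : \bar R) (k m n : nat) :
  (0 < k)%N -> (0 < m)%N -> 0 <= a -> 0 <= b -> a *+ k *+ m <= b *+ n ->
  (fine a / fine b <= k%:R^-1 * n%:R / m%:R)%R.
Proof.
move=> k_gt0 m_gt0 a_ge0 b_ge0 le_ab.
case: b b_ge0 le_ab => [b||] //= b_ge0 le_ab; last by rewrite invr0 mulr0.
case: a a_ge0 le_ab => [a||] //= a_ge0 le_ab; last first.
  by rewrite mul0r !mulr_ge0 ?invr_ge0.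
rewrite -!EFin_natmul !lee_fin in le_ab a_ge0 b_ge0.
have [->|b_neq0] := eqVneq b 0%R; first by rewrite invr0 mulr0.
have b_gt0 : (0 < b)%R by rewrite lt_def b_neq0.
have -> : (k%:R^-1 * n%:R / m%:R = n%:R / (k * m)%:R :> R)%R.
  rewrite natrM; field.
  by rewrite !pnatr_eq0 -!lt0n k_gt0 m_gt0.
rewrite ler_pdivlMr ?ltr0n ?muln_gt0 ?k_gt0 // mulrAC ler_pdivrMr //.
by rewrite mulr_natr mulr_natl mulrnA.
Qed.

End WeightedAverages.

Section BinPackingBounds.
Variable R : realType.
Implicit Types (s : seq R) (k : nat).

Lemma feasible_sum_le s k : feasible s k -> \sum_(x <- s) x <= k%:R.
Proof.
move=> /existsP[a /forallP a_fits].
rewrite (big_nth 0) big_mkord (partition_big a predT) //=.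
by rewrite -[k in k%:R]card_ord -sumr_const; apply: ler_sum => j _; exact: a_fits.
Qed.

Lemma OPT_ge_sum s : items_ok s -> \sum_(x <- s) x <= (OPT s)%:R.
Proof.
move=> /allP s_ok; rewrite /OPT; apply: (big_ind (fun k => \sum_(x <- s) x <= k%:R)).
- rewrite -sum1_size natr_sum !big_seq; apply: ler_sum => x x_s.
  by have /andP[_] := s_ok x x_s.
- by move=> k l sk sl; rewrite /minn; case: ifP.
- by move=> k; exact: feasible_sum_le.
Qed.

Lemma OPT_le_size s : (OPT s <= size s)%N.
Proof.
rewrite /OPT; apply: (big_ind (fun k => k <= size s)%N) => //.
- by move=> k l sk _; rewrite geq_min sk.
- by move=> k _; rewrite -ltnS.
Qed.

Lemma OPT_gt0 s : (0 < size s)%N -> (0 < OPT s)%N.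
Proof.
move=> s_gt0; rewrite /OPT; apply: (big_ind (fun k => 0 < k)%N) => //.
- by move=> k l k_gt0 l_gt0; rewrite leq_min k_gt0.
- by move=> [[|k] _] //= /existsP[a _]; case: (a (Ordinal s_gt0)).
Qed.

Lemma mul_size_le_sum s (c : R) :
  {in s, forall x, c <= x} -> c * (size s)%:R <= \sum_(x <- s) x.
Proof.
move=> c_le; rewrite -sum1_size natr_sum mulr_sumr mulr1 !big_seq.
by apply: ler_sum => x x_s; exact: c_le.
Qed.

Lemma alg_bins_le_size (A : online_alg R) s : (alg_bins A s <= size s)%N.
Proof. by rewrite /alg_bins (leq_trans (size_undup _)) // size_mkseq. Qed.

End BinPackingBounds.

Section Symmetrization.
Variables (R : realType) (f : R -> R) (n : nat).
Hypothesis f_ge0 : forall x, 0 <= f x.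

Definition iid_weight (x : n.-tuple R) : R := \prod_(i < n) f (tnth x i).

Definition perm_total (g : seq R -> nat) (x : n.-tuple R) : nat :=
  \sum_(s : 'S_n) g (permute_list x s).

Definition permute_tuple (x : n.-tuple R) (s : 'S_n) : n.-tuple R :=
  [tuple tnth x (s i) | i < n].

Lemma permute_tuple_bij (s : 'S_n) : bijective (permute_tuple ^~ s).
Proof.
by exists (permute_tuple ^~ s^-1%g) => x; apply: eq_from_tnth => i;
  rewrite !tnth_mktuple ?permKV ?permK.
Qed.

Lemma iid_weight_permute x s : iid_weight (permute_tuple x s) = iid_weight x.
Proof.
rewrite /iid_weight [RHS](reindex_inj (@perm_inj _ s)) /=.
by apply: eq_bigr => i _; rewrite tnth_mktuple.
Qed.

Lemma iid_weight_ge0 x : 0 <= iid_weight x.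
Proof. exact: prodr_ge0. Qed.

Lemma iid_expect_ge0 g : (0 <= iid_expect f n g)%E.
Proof. by apply: esum_ge0 => x _; rewrite lee_fin mulr_ge0 ?iid_weight_ge0. Qed.

Lemma iid_expect_permute g s :
  iid_expect f n g
    = \esum_(x in [set: n.-tuple R]) (iid_weight x * (g (permute_list x s))%:R)%:E.
Proof.
rewrite /iid_expect (reindex_esum setT setT (permute_tuple ^~ s)); last first.
  by rewrite setTT_bijective; exact: permute_tuple_bij.
by apply: eq_esum => x _; congr ((_ * _)%:E); exact: iid_weight_permute.
Qed.

Lemma iid_expect_perm_total g :
  (iid_expect f n g *+ n`!
    = \esum_(x in [set: n.-tuple R]) (iid_weight x * (perm_total g x)%:R)%:E)%E.
Proof.
have <- : (\sum_(s : 'S_n) iid_expect f n g = iid_expect f n g *+ n`!)%E.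
  by rewrite sumr_const card_Sn.
rewrite (eq_bigr _ (fun s _ => iid_expect_permute g s)).
rewrite -esum_sum => [|x s _ _]; last by rewrite lee_fin mulr_ge0 ?iid_weight_ge0.
by apply: eq_esum => x _; rewrite sumEFin natr_sum mulr_sumr.
Qed.

Lemma perm_expectE (A : online_alg R) x :
  perm_expect A x = n`!%:R^-1 * (perm_total (alg_bins A) x)%:R.
Proof. by rewrite /perm_expect natr_sum. Qed.

Lemma perm_total_le (g : seq R -> nat) x :
  (forall s, size s = n -> g s <= n)%N -> (perm_total g x <= n`! * n)%N.
Proof.
move=> g_le; rewrite -card_Sn -sum_nat_const; apply: leq_sum => s _.
by apply: g_le; rewrite size_map size_enum_ord.
Qed.

End Symmetrization.

Lemma discrete_distr_01_mass_pos (R : realType) (f : R -> R) :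
  discrete_distr_01 f -> exists x, 0 < f x.
Proof.
move=> [f_ge0 _ f_sum]; apply: contrapT => no_mass; move: f_sum.
rewrite esum1 => [/eqP|x _]; first by rewrite eqe eq_sym oner_eq0.
congr EFin; apply/eqP; rewrite eq_le f_ge0 andbT leNgt; apply/negP => fx_gt0.
by apply: no_mass; exists x.
Qed.

Theorem lemma14 (R : realType) (A : online_alg R) (f : R -> R) (n : nat) :
  valid_alg A -> discrete_distr_01 f -> (0 < n)%N ->
  exists I : n.-tuple R,
    [/\ items_ok (tval I),
        fine (iid_expect f n (alg_bins A)) / fine (iid_expect f n (@OPT R))
          <= perm_expect A I / (OPT (tval I))%:R
      & forall c : R, 0 < c -> (forall x, 0 < f x -> c <= x) ->
          c * n%:R <= (OPT (tval I))%:R].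
Proof.
(* The averaging argument never uses that A packs correctly. *)
move=> _ f_distr n_gt0; have [f_ge0 f_supp _] := f_distr.
have [x0 fx0_gt0] := discrete_distr_01_mass_pos f_distr.
have w_x0_gt0 : 0 < iid_weight f [tuple x0 | _ < n].
  by apply: prodr_gt0 => i _; rewrite tnth_mktuple.
have K_le (x : n.-tuple R) : (perm_total (alg_bins A) x <= n`! * n)%N.
  by apply: perm_total_le => s <-; exact: alg_bins_le_size.
have OPT_le (x : n.-tuple R) : (OPT (tval x) <= n)%N.
  by rewrite -[X in (_ <= X)%N](size_tuple x) OPT_le_size.
have OPT_pos (x : n.-tuple R) : (0 < OPT (tval x))%N by rewrite OPT_gt0 ?size_tuple.
have [I wI_gt0 I_max] := exists_max_ratio (S := fun x => 0 < iid_weight f x)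
  w_x0_gt0 K_le OPT_le (fun x _ => OPT_pos x).
have I_supp x : x \in tval I -> 0 < f x.
  move=> /tnthP[i ->]; rewrite lt_def f_ge0 andbT.
  by move/lt0r_neq0/prodf_neq0: wI_gt0; apply.
have I_ok : items_ok (tval I) by apply/allP => x /I_supp /f_supp.
exists I; split=> //.
- rewrite perm_expectE; apply: fine_ratio_le; rewrite ?iid_expect_ge0 ?fact_gt0 //.
  rewrite iid_expect_perm_total //.
  by apply: esum_ratio_le => //; exact: iid_weight_ge0.
- move=> c _ c_le; rewrite -[X in c * X%:R](size_tuple I).
  apply: le_trans (OPT_ge_sum I_ok).
  by apply: mul_size_le_sum => x /I_supp /c_le.
Qed.
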